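(* Let $S_0$ be a classical-quantum program, $\sigma_0$ a classical state and $r\ge 0$ an integer, and let $\mathcal{T}$ be an $r$-fault transition tree starting with $(S_0,\sigma_0)$. Then the map $\mathcal{E}_{\mathcal{T}}:\rho\mapsto \sum_{\langle\downarrow,\sigma,\rho'\rangle\in\mathcal{T}(\rho)}\rho'$ (sum over all leaf nodes of $\mathcal{T}(\rho)$) is well defined (the possibly infinite sum converges) and is a quantum channel, i.e. a completely positive, trace-non-increasing linear map (not necessarily trace-preserving).
   Context: Programs. Fix qubits $q_1,\dots,q_N$. A classical-quantum program (cq-prog) is generated by the grammar $S ::= S_1;S_2 \mid q:=|0\rangle \mid U(\bar q)\mid x:=\mathtt{measure}\ q \mid x:=e \mid \mathtt{if}\ b\ \mathtt{then}\ S_1\ \mathtt{else}\ S_2 \mid y:=f(x) \mid \mathtt{repeat}\ S\ \mathtt{until}\ b$, where $q$ is a qubit, $\bar q$ a list of distinct qubits, $U$ a unitary on $\bar q$, $x,y$ classical variables, $e$ a classical expression, $b$ a Boolean expression and $f$ a classical function. A configuration is a triple $\langle S,\sigma,\rho\rangle$ where $\sigma$ maps classical variables to values, $\rho$ is a partial density operator (positive semidefinite, trace $\le 1$) on the $N$ qubits, and $S$ is a program or the terminated program $\downarrow$ (with $\downarrow;S=S$). For an operator $A$ on qubits $\bar q$, $A_{\bar q}$ denotes $A$ on $\bar q$ tensored with the identity elsewhere, and $|i\rangle_q\langle j|$ denotes $|i\rangle\langle j|$ on qubit $q$. Ideal transitions $\to$: (IN) $\langle q:=|0\rangle,\sigma,\rho\rangle\to\langle\downarrow,\sigma,|0\rangle_q\langle0|\rho|0\rangle_q\langle0|+|0\rangle_q\langle1|\rho|1\rangle_q\langle0|\rangle$;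 (UT) $\langle U(\bar q),\sigma,\rho\rangle\to\langle\downarrow,\sigma,U_{\bar q}\rho U_{\bar q}^\dagger\rangle$; (M0) $\langle x:=\mathtt{measure}\ q,\sigma,\rho\rangle\to\langle\downarrow,\sigma[0/x],|0\rangle_q\langle0|\rho|0\rangle_q\langle0|\rangle$ and (M1) the same with $1$ in place of $0$; (AS) $\langle x:=e,\sigma,\rho\rangle\to\langle\downarrow,\sigma[\sigma(e)/x],\rho\rangle$; (CO) $\langle y:=f(x),\sigma,\rho\rangle\to\langle\downarrow,\sigma[f(\sigma(x))/y],\rho\rangle$; (SC) if $\langle S_1,\sigma,\rho\rangle\to\langle S_1',\sigma',\rho'\rangle$ then $\langle S_1;S_2,\sigma,\rho\rangle\to\langle S_1';S_2,\sigma',\rho'\rangle$; (CT)/(CF) $\langle \mathtt{if}\ b\ \mathtt{then}\ S_1\ \mathtt{else}\ S_2,\sigma,\rho\rangle$ goes to $\langle S_1,\sigma,\rho\rangle$ if $\sigma\models b$ and to $\langle S_2,\sigma,\rho\rangle$ otherwise; (RU) $\langle\mathtt{repeat}\ S\ \mathtt{until}\ b,\sigma,\rho\rangle\to\langle S;\mathtt{if}\ b\ \mathtt{then}\ \downarrow\ \mathtt{else}\ \{\mathtt{repeat}\ S\ \mathtt{until}\ b\},\sigma,\rho\rangle$. Faulty transitions $\leadsto$ (only quantum statements can be faulty; there is also the analogous sequencing rule): (F-IN) $\langle q:=|0\rangle,\sigma,\rho\rangle\leadsto\langle\downarrow,\sigma,\mathcal{E}_q(\rho)\rangle$ and (F-UT)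 $\langle U(\bar q),\sigma,\rho\rangle\leadsto\langle\downarrow,\sigma,\mathcal{E}_{\bar q}(\rho)\rangle$, with $\mathcal{E}_q,\mathcal{E}_{\bar q}$ arbitrary trace-preserving completely positive maps acting nontrivially only on $q$ (resp. $\bar q$); (F-M0)/(F-M1) $\langle x:=\mathtt{measure}\ q,\sigma,\rho\rangle\leadsto\langle\downarrow,\sigma[c/x],\mathcal{E}_{c,q}(\rho)\rangle$ for $c\in\{0,1\}$, with $\mathcal{E}_{c,q}$ arbitrary completely positive maps acting nontrivially only on $q$. Transition trees. For a program $S_0$, classical state $\sigma_0$ and integer $r\ge0$, an $r$-fault transition tree starting with $(S_0,\sigma_0)$ is a (possibly infinite) rooted tree whose nodes are configurations such that: the root is $\langle S_0,\sigma_0,\widetilde\rho\rangle$ with $\widetilde\rho$ an indeterminate quantum state; a node is a leaf iff its program is $\downarrow$; a node whose program begins with a measurement $x:=\mathtt{measure}\ q$ has exactly two children, generated either by (M0) and (M1), or by (F-M0) and (F-M1) with $\mathcal{E}_{0,q}+\mathcal{E}_{1,q}$ trace-preserving; every other non-leaf node has exactly one child obtained by one ideal or faulty transition; every path contains at most $r$ faulty transitions. $\mathcal{T}(\rho_0)$ denotes the tree obtained by substituting the concrete state $\rho_0$ for $\widetilde\rho$. *)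

From mathcomp Require Import all_boot all_algebra.
From mathcomp Require Import complex.
From mathcomp Require Import reals.
Set Implicit Arguments. Unset Strict Implicit. Unset Printing Implicit Defensive.
Import GRing.Theory Num.Theory.
Local Open Scope ring_scope.

Section QDefs.
Variable R : realType.
Notation C := (R[i]).

Definition op (I : finType) := I -> I -> C.

Definition op0 {I : finType} : op I := fun _ _ => 0.
Definition op1 {I : finType} : op I := fun x y => (x == y)%:R.
Definition opadd {I : finType} (A B : op I) : op I := fun x y => A x y + B x y.
Definition opscale {I : finType} (a : C) (A : op I) : op I := fun x y => a * A x y.
Definition opmul {I : finType} (A B : op I) : op I :=
  fun x y => \sum_(z : I) A x z * B z y.
Definition adj {I : finType} (A : op I) : op I := fun x y => (A y x)^*.
Definition trace {I : finType} (A : op I) : C := \sum_(x : I) A x x.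

Definition psd {I : finType} (A : op I) : Prop :=
  forall v : I -> C, 0 <= \sum_(x : I) \sum_(y : I) (v x)^* * A x y * v y.

Definition unitary {I : finType} (U : op I) : Prop :=
  opmul U (adj U) = op1 /\ opmul (adj U) U = op1.

Definition linear_map {I J : finType} (E : op I -> op J) : Prop :=
  forall (a : C) (A B : op I), E (opadd (opscale a A) B) = opadd (opscale a (E A)) (E B).

(* id_k (x) E, acting blockwise on operators of I * 'I_k *)
Definition ampl {I J : finType} (k : nat) (E : op I -> op J) (X : op (I * 'I_k)%type)
  : op (J * 'I_k)%type :=
  fun xi yj => E (fun a b => X (a, xi.2) (b, yj.2)) xi.1 yj.1.

Definition completely_positive {I J : finType} (E : op I -> op J) : Prop :=
  forall (k : nat) (X : op (I * 'I_k)%type), psd X -> psd (ampl E X).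

Definition trace_preserving {I J : finType} (E : op I -> op J) : Prop :=
  forall A : op I, trace (E A) = trace A.

(* N qubits: computational basis = {ffun 'I_N -> bool}                 *)
Variable N : nat.
Definition basis (k : nat) := {ffun 'I_k -> bool}.
Notation B := (basis N).

Definition restrict {k} (qs : k.-tuple 'I_N) (x : B) : basis k :=
  [ffun i => x (tnth qs i)].

(* basis state equal to a on qs and to x elsewhere *)
Definition merge {k} (qs : k.-tuple 'I_N) (a : basis k) (x : B) : B :=
  [ffun j => if [pick i | tnth qs i == j] is Some i then a i else x j].

(* A_qs : operator A on the qubits qs tensored with the identity elsewhere *)
Definition liftop {k} (qs : k.-tuple 'I_N) (A : op (basis k)) : op B :=
  fun x y => A (restrict qs x) (restrict qs y) *
             [forall j, (j \notin qs) ==> (x j == y j)]%:R.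

(* E_qs : superoperator E on the qubits qs tensored with id elsewhere *)
Definition liftmap {k} (qs : k.-tuple 'I_N) (E : op (basis k) -> op (basis k))
  (rho : op B) : op B :=
  fun x y => E (fun a b => rho (merge qs a x) (merge qs b y))
               (restrict qs x) (restrict qs y).

Definition ketbra (i j : bool) : op (basis 1) :=
  fun a b => ((a ord0 == i) && (b ord0 == j))%:R.

Definition kb (q : 'I_N) (i j : bool) : op B := liftop [tuple q] (ketbra i j).

Definition var := nat.
Definition value := nat.
Definition cstate := var -> value.
Definition upd (s : cstate) (x : var) (v : value) : cstate :=
  fun z => if z == x then v else s z.

Inductive prog : Type :=
| PTerm                                     (* the terminated program "down" *)
| PSeq (S1 S2 : prog)
| PInit (q : 'I_N)                          (* q := |0> *)
| PUnit (k : nat) (qs : k.-tuple 'I_N) (U : op (basis k))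
| PMeas (x : var) (q : 'I_N)
| PAssign (x : var) (e : cstate -> value)
| PIf (b : cstate -> bool) (S1 S2 : prog)
| PFun (y x : var) (f : value -> value)
| PRepeat (P : prog) (b : cstate -> bool).  (* repeat S until b *)

Fixpoint wf_prog (P : prog) : Prop :=
  match P with
  | PTerm => False
  | PSeq S1 S2 => wf_prog S1 /\ wf_prog S2
  | PInit _ => True
  | PUnit k qs U => uniq qs /\ unitary U
  | PMeas _ _ => True
  | PAssign _ _ => True
  | PIf _ S1 S2 => wf_prog S1 /\ wf_prog S2
  | PFun _ _ _ => True
  | PRepeat P _ => wf_prog P
  end.

(* sequencing with the convention down;S = S *)
Definition pseq (S1 S2 : prog) : prog :=
  if S1 is PTerm then S2 else PSeq S1 S2.

Definition init_map (q : 'I_N) (rho : op B) : op B :=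
  opadd (opmul (kb q false false) (opmul rho (kb q false false)))
        (opmul (kb q false true) (opmul rho (kb q true false))).

Definition unit_map {k} (qs : k.-tuple 'I_N) (U : op (basis k)) (rho : op B) : op B :=
  opmul (liftop qs U) (opmul rho (adj (liftop qs U))).

Definition meas_map (q : 'I_N) (c : bool) (rho : op B) : op B :=
  opmul (kb q c c) (opmul rho (kb q c c)).

Definition local_cp {k} (qs : k.-tuple 'I_N) (M : op B -> op B) : Prop :=
  exists E : op (basis k) -> op (basis k),
    [/\ linear_map E, completely_positive E & M = liftmap qs E].

Definition local_cptp {k} (qs : k.-tuple 'I_N) (M : op B -> op B) : Prop :=
  exists E : op (basis k) -> op (basis k),
    [/\ linear_map E, completely_positive E, trace_preserving E & M = liftmap qs E].

(* one non-measurement transition <S,s,rho> -> <S',s',M rho>; the bool flag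
   says whether the transition is faulty (~>) or ideal (->). *)
Inductive step1 : prog -> cstate -> prog -> cstate -> (op B -> op B) -> bool -> Prop :=
| st_IN q s : step1 (PInit q) s PTerm s (init_map q) false
| st_FIN q s M : local_cptp [tuple q] M -> step1 (PInit q) s PTerm s M true
| st_UT k qs U s : step1 (@PUnit k qs U) s PTerm s (unit_map qs U) false
| st_FUT k qs U s M : local_cptp qs M -> step1 (@PUnit k qs U) s PTerm s M true
| st_AS x e s : step1 (PAssign x e) s PTerm (upd s x (e s)) id false
| st_CO y x f s : step1 (PFun y x f) s PTerm (upd s y (f (s x))) id false
| st_CT (b : cstate -> bool) S1 S2 s : b s -> step1 (PIf b S1 S2) s S1 s id false
| st_CF (b : cstate -> bool) S1 S2 s : ~~ b s -> step1 (PIf b S1 S2) s S2 s id false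
| st_RU P b s : step1 (PRepeat P b) s (PSeq P (PIf b PTerm (PRepeat P b))) s id false
| st_SC S1 S2 s S1' s' M f :
    step1 S1 s S1' s' M f -> step1 (PSeq S1 S2) s (pseq S1' S2) s' M f.

Fixpoint head_meas (P : prog) : option (var * 'I_N) :=
  match P with
  | PMeas x q => Some (x, q)
  | PSeq S1 _ => head_meas S1
  | _ => None
  end.

Fixpoint meas_cont (P : prog) : prog :=
  match P with
  | PMeas _ _ => PTerm
  | PSeq S1 S2 => pseq (meas_cont S1) S2
  | _ => P
  end.

(* A node: its program, classical state, its quantum state as a function
   of the indeterminate initial state rho~, and whether the transition
   from its parent to it is faulty. *)
Record node := Node {
  nprog : prog;
  nst : cstate;
  nq : op B -> op B;
  nfault : bool }.

(* A (possibly infinite) tree with nodes addressed by paths from the root;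
   the children of the node at p are at rcons p false and rcons p true. *)
Definition tree := seq bool -> option node.

Definition is_leaf (n : node) : bool := if nprog n is PTerm then true else false.

Definition nfaults (t : tree) (p : seq bool) : nat :=
  \sum_(i < size p) (if t (take i.+1 p) is Some n then nfault n else false).

Definition is_fault_tree (r : nat) (S0 : prog) (s0 : cstate) (t : tree) : Prop :=
  [/\ t [::] = Some (Node S0 s0 id false),
      (forall p b, t p = None -> t (rcons p b) = None),
      (forall p n, t p = Some n ->
         if is_leaf n then (forall b, t (rcons p b) = None)
         else if head_meas (nprog n) is Some (x, q) then
           (* measurement: two children, by (M0),(M1) or by (F-M0),(F-M1) *)
           (   (forall c : bool, t (rcons p c) =
                  Some (Node (meas_cont (nprog n)) (upd (nst n) x c)
                             (meas_map q c \o nq n) false))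
            \/ (exists M0 M1 : op B -> op B,
                  [/\ local_cp [tuple q] M0, local_cp [tuple q] M1,
                      (forall rho, trace (opadd (M0 rho) (M1 rho)) = trace rho) &
                      forall c : bool, t (rcons p c) =
                        Some (Node (meas_cont (nprog n)) (upd (nst n) x c)
                                   ((if c then M1 else M0) \o nq n) true)]))
         else
           t (rcons p true) = None /\
           exists n', t (rcons p false) = Some n' /\
             exists M, step1 (nprog n) (nst n) (nprog n') (nst n') M (nfault n')
                       /\ nq n' = M \o nq n) &
      (forall p n, t p = Some n -> nfaults t p <= r)%N ].

(* the state at leaf p of T(rho) (0 if p is not a leaf of T) *)
Definition leafval (t : tree) (rho : op B) (p : seq bool) : op B :=
  if t p is Some n then (if is_leaf n then nq n rho else op0) else op0.

(* unordered (possibly infinite) summation of a family of operators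
   indexed by paths: the finite partial sums converge (entrywise) to L *)
Definition has_sum (f : seq bool -> op B) (L : op B) : Prop :=
  forall eps : C, 0 < eps ->
    exists s0 : seq (seq bool), forall s : seq (seq bool),
      uniq s -> {subset s0 <= s} ->
      forall x y, `| \sum_(p <- s) f p x y - L x y | < eps.

End QDefs.

From Pilot Require Import Defs.
From mathcomp Require Import all_boot all_order all_algebra.
From mathcomp Require Import complex.
From mathcomp Require Import reals classical_sets.
From mathcomp Require Import ring.
From Stdlib Require Import FunctionalExtensionality IndefiniteDescription.
Import Order.TTheory GRing.Theory Num.Theory.
Local Open Scope ring_scope.
Set Implicit Arguments. Unset Strict Implicit. Unset Printing Implicit Defensive.

(* Every leaf of the tree is reached from the root by composing completely
   positive maps (unitary conjugations, initialisations, measurement branches,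
   local quantum operations), so each leaf map is linear and completely
   positive.  Non-measurement transitions preserve trace and so do the two
   branches of a measurement together; hence for a state rho the traces of the
   nodes at depth d plus the traces of the leaves above depth d add up to
   tr rho, and the leaves of any finite set carry total trace at most tr rho.
   For psd rho the quadratic forms of the leaf states are therefore summable
   families of nonnegative reals, polarisation recovers the entries, and since
   every operator is a combination of positive rank-one operators the sum
   converges for every rho.  Linearity, complete positivity and the trace
   bound pass to the limit. *)

Section UnorderedSum.
Variables (V : numFieldType) (T : eqType).

Definition has_sumr (f : T -> V) (l : V) :=
  forall eps : V, 0 < eps -> exists s0 : seq T, forall s, uniq s -> {subset s0 <= s} ->
    `|\sum_(p <- s) f p - l| < eps.

Lemma eq_has_sumr (f g : T -> V) l : f =1 g -> has_sumr f l -> has_sumr g l.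
Proof.
move=> fg H eps e0; have [s0 Hs] := H _ e0; exists s0 => s us sub.
by rewrite -(eq_bigr _ (fun p _ => fg p)); apply: Hs.
Qed.

Lemma has_sumr0 : has_sumr (fun _ => 0) 0.
Proof. by move=> eps e0; exists [::] => s _ _; rewrite big1 // subr0 normr0. Qed.

Lemma has_sumrD (f g : T -> V) a b :
  has_sumr f a -> has_sumr g b -> has_sumr (fun p => f p + g p) (a + b).
Proof.
move=> Hf Hg eps e0; have e2 : 0 < eps / 2 by rewrite divr_gt0.
have [s1 H1] := Hf _ e2; have [s2 H2] := Hg _ e2.
exists (s1 ++ s2) => s us sub.
have h1 : `|\sum_(p <- s) f p - a| < eps / 2.
  by apply: H1 => // x hx; apply: sub; rewrite mem_cat hx.
have h2 : `|\sum_(p <- s) g p - b| < eps / 2.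
  by apply: H2 => // x hx; apply: sub; rewrite mem_cat hx orbT.
rewrite big_split /= opprD addrACA (splitr eps).
exact: le_lt_trans (ler_normD _ _) (ltrD h1 h2).
Qed.

Lemma has_sumrZ c (f : T -> V) a : has_sumr f a -> has_sumr (fun p => c * f p) (c * a).
Proof.
move=> Hf eps e0; have c1 : 0 < `|c| + 1 by rewrite ltr_wpDl.
have [|s0 H] := Hf (eps / (`|c| + 1)); first by rewrite divr_gt0.
exists s0 => s us sub; rewrite -mulr_sumr -mulrBr normrM.
apply: le_lt_trans (_ : _ <= (`|c| + 1) * `|\sum_(p <- s) f p - a|) _.
  by rewrite ler_wpM2r // lerDl.
by rewrite mulrC -ltr_pdivlMr // H.
Qed.

Lemma has_sumr_sum (K : Type) (ks : seq K) (F : K -> T -> V) (L : K -> V) :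
  (forall k, has_sumr (F k) (L k)) ->
  has_sumr (fun p => \sum_(k <- ks) F k p) (\sum_(k <- ks) L k).
Proof.
move=> H; elim: ks => [|k ks IH].
  by rewrite big_nil; apply: eq_has_sumr has_sumr0 => p; rewrite big_nil.
by rewrite big_cons; apply: eq_has_sumr (has_sumrD (H k) IH) => p; rewrite big_cons.
Qed.

Lemma has_sumr_unique (f : T -> V) a b : has_sumr f a -> has_sumr f b -> a = b.
Proof.
move=> Ha Hb; apply/eqP; rewrite -subr_eq0 -normr_eq0.
have [//|ne] := eqVneq `|a - b| 0.
have e0 : 0 < `|a - b| / 2 by rewrite divr_gt0 // lt_def ne normr_ge0.
have [s1 H1] := Ha _ e0; have [s2 H2] := Hb _ e0.
pose s := undup (s1 ++ s2).
have h1 : `|\sum_(p <- s) f p - a| < `|a - b| / 2.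
  by apply: H1 => [|x hx]; rewrite ?undup_uniq // mem_undup mem_cat hx.
have h2 : `|\sum_(p <- s) f p - b| < `|a - b| / 2.
  by apply: H2 => [|x hx]; rewrite ?undup_uniq // mem_undup mem_cat hx orbT.
have : `|a - b| < `|a - b| / 2 + `|a - b| / 2.
  have E : a - b = - (\sum_(p <- s) f p - a) + (\sum_(p <- s) f p - b).
    by rewrite opprB addrA subrK.
  by rewrite {1}E; apply: le_lt_trans (ler_normD _ _) _; rewrite normrN ltrD.
by rewrite -splitr ltxx.
Qed.

Lemma has_sumr_uniform (J : finType) (F : J -> T -> V) (L : J -> V) :
  (forall j, has_sumr (F j) (L j)) -> forall eps, 0 < eps ->
  exists s0 : seq T, forall s : seq T, uniq s -> {subset s0 <= s} ->
    forall j, `|\sum_(p <- s) F j p - L j| < eps.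
Proof.
move=> H eps e0.
suff [s0 Hs] : exists s0 : seq T, forall s, uniq s -> {subset s0 <= s} ->
    forall j, j \in enum J -> `|\sum_(p <- s) F j p - L j| < eps.
  by exists s0 => s us sub j; apply: Hs; rewrite ?mem_enum.
elim: (enum J) => [|j js [s1 IH]]; first by exists [::].
have [s2 H2] := H j _ e0; exists (s1 ++ s2) => s us sub i; rewrite inE.
case/orP=> [/eqP -> | hi].
  by apply: H2 => // x hx; apply: sub; rewrite mem_cat hx orbT.
by apply: IH => // x hx; apply: sub; rewrite mem_cat hx.
Qed.

Lemma approx_ge0 (l : V) :
  (forall eps, 0 < eps -> exists2 z, 0 <= z & `|l - z| < eps) -> 0 <= l.
Proof.
move=> H; suff : `|l - `|l| | == 0 by rewrite normr_eq0 subr_eq0 => /eqP ->.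
have [//|ne] := eqVneq `|l - `|l| | 0.
have e0 : 0 < `|l - `|l| | / 2 by rewrite divr_gt0 // lt_def ne normr_ge0.
have [z z0 hz] := H _ e0.
have : `|l - `|l| | < `|l - `|l| | / 2 + `|l - `|l| | / 2.
  have E : l - `|l| = (l - z) + (`|z| - `|l|) by rewrite (ger0_norm z0) addrA subrK.
  rewrite {1}E; apply: le_lt_trans (ler_normD _ _) _; rewrite ltrD //.
  by apply: le_lt_trans (ler_dist_dist _ _) _; rewrite distrC.
by rewrite -splitr ltxx.
Qed.

Lemma has_sumr_ge (f : T -> V) l M :
  (forall s, uniq s -> M <= \sum_(p <- s) f p) -> has_sumr f l -> M <= l.
Proof.
move=> hM hl; rewrite -subr_ge0; apply: approx_ge0 => eps e0.
have [s0 Hs] := hl _ e0; pose s := undup s0.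
exists (\sum_(p <- s) f p - M); first by rewrite subr_ge0 hM ?undup_uniq.
rewrite opprB addrA subrK distrC.
by apply: Hs => [|x]; rewrite ?undup_uniq ?mem_undup.
Qed.

Lemma has_sumr_le (f : T -> V) l M :
  (forall s, uniq s -> \sum_(p <- s) f p <= M) -> has_sumr f l -> l <= M.
Proof.
move=> hM /(has_sumrZ (-1)); rewrite mulN1r -lerN2 => /has_sumr_ge; apply => s us.
by rewrite -mulr_sumr mulN1r lerN2 hM.
Qed.

End UnorderedSum.

Lemma ler_sum_subset (V : numDomainType) (T : eqType) (g : T -> V) s1 s2 :
  (forall p, 0 <= g p) -> uniq s1 -> uniq s2 -> {subset s1 <= s2} ->
  \sum_(p <- s1) g p <= \sum_(p <- s2) g p.
Proof.
move=> g0 u1 u2 sub; rewrite [leRHS](bigID (mem s1)) /= -[X in X + _]big_filter.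
have -> : \sum_(p <- [seq p <- s2 | p \in s1]) g p = \sum_(p <- s1) g p.
  apply: perm_big; apply: uniq_perm; rewrite ?filter_uniq // => x.
  by rewrite mem_filter; case hx: (x \in s1) => //=; rewrite sub.
by rewrite lerDl sumr_ge0.
Qed.

Lemma ge0_complex_real (R : realType) (z : R[i]) : 0 <= z -> z = (complex.Re z)%:C%C.
Proof.
rewrite lecE => /andP [/eqP /= hi _].
by rewrite {1}[z]complexE hi raddf0 mulr0 addr0.
Qed.

Lemma ge0_bounded_has_sumr (R : realType) (T : eqType) (f : T -> R[i]) (M : R[i]) :
  (forall p, 0 <= f p) -> (forall s, uniq s -> \sum_(p <- s) f p <= M) ->
  exists l, has_sumr f l.
Proof.
move=> f0 fM; pose g p := complex.Re (f p).
have g0 p : 0 <= g p by have := f0 p; rewrite lecE => /andP [].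
have sumE s : \sum_(p <- s) f p = (\sum_(p <- s) g p)%:C%C.
  by rewrite raddf_sum; apply: eq_bigr => p _; exact: ge0_complex_real.
pose E : set R := fun x => exists2 s, uniq s & x = \sum_(p <- s) g p.
have supE : has_sup E.
  split; first by exists 0, [::]; rewrite ?big_nil.
  exists (complex.Re M) => x [s us ->].
  by have := fM s us; rewrite sumE lecE => /andP [].
exists (sup E)%:C%C => eps e0.
have er : 0 < complex.Re eps by move: e0; rewrite ltcE => /andP [].
have [_ [s0 us0 ->] he] := sup_adherent er supE.
exists s0 => s us sub.
have h1 : \sum_(p <- s0) g p <= \sum_(p <- s) g p by apply: ler_sum_subset.
have h2 : \sum_(p <- s) g p <= sup E by apply: sup_upper_bound => //; exists s.
rewrite sumE -raddfB -normrN -raddfN opprB ger0_norm; last by rewrite ler0c subr_ge0.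
rewrite (ge0_complex_real (ltW e0)) ltcR ltrBlDr -ltrBlDl.
exact: lt_le_trans he h1.
Qed.

Section DeltaSums.
Variable V : pzRingType.

Lemma sum_delta_l (I : finType) (c : I) (G : I -> V) : \sum_a (c == a)%:R * G a = G c.
Proof.
rewrite (bigD1 c) //= eqxx mul1r big1 ?addr0 // => a ha.
by rewrite eq_sym (negbTE ha) mul0r.
Qed.

Lemma sum_delta_r (I : finType) (c : I) (G : I -> V) : \sum_a G a * (c == a)%:R = G c.
Proof.
by rewrite -(sum_delta_l c G); apply: eq_bigr => a _; rewrite mulr_natl mulr_natr.
Qed.

Lemma sum_pair (I J : finType) (G : I * J -> V) : \sum_(p : I * J) G p = \sum_i \sum_j G (i, j).
Proof. by rewrite pair_bigA; apply: eq_bigr => -[]. Qed.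

Lemma sum_pair_delta (I : finType) k (c : 'I_k) (G : I * 'I_k -> V) :
  \sum_(a : I * 'I_k) (c == a.2)%:R * G a = \sum_z G (z, c).
Proof. by rewrite sum_pair; apply: eq_bigr => z _; rewrite (sum_delta_l c (fun j => G (z, j))). Qed.

End DeltaSums.

Section Operators.
Variable R : realType.
Local Notation C := R[i].

Lemma op_ext (I : finType) (A B : op R I) : (forall x y, A x y = B x y) -> A = B.
Proof. by move=> AB; do 2!apply: functional_extensionality => ?; apply: AB. Qed.

Lemma psd_sandwich (I J : finType) (L : J -> I -> C) (X : op R I) :
  psd X -> psd (fun p q => \sum_a \sum_b L p a * X a b * (L q b)^*).
Proof.
move=> psdX v; have := psdX (fun a => \sum_q (L q a)^* * v q); congr (_ <= _).
transitivity (\sum_a \sum_b \sum_p \sum_q (L p a * (v p)^*) * X a b * ((L q b)^* * v q)).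
  apply: eq_bigr => a _; apply: eq_bigr => b _.
  rewrite rmorph_sum !mulr_suml; apply: eq_bigr => p _.
  by rewrite mulr_sumr rmorphM /= conjCK.
symmetry; transitivity (\sum_p \sum_q \sum_a \sum_b
     (L p a * (v p)^*) * X a b * ((L q b)^* * v q)).
  apply: eq_bigr => p _; apply: eq_bigr => q _.
  rewrite mulr_sumr mulr_suml; apply: eq_bigr => a _.
  by rewrite mulr_sumr mulr_suml; apply: eq_bigr => b _; ring.
under eq_bigr => p _ do rewrite exchange_big /=.
under eq_bigr => p _ do under eq_bigr => a _ do rewrite exchange_big /=.
by rewrite exchange_big; apply: eq_bigr => a _; rewrite exchange_big.
Qed.

Lemma psd_reindex (I J : finType) (f : J -> I) (X : op R I) :
  psd X -> psd (fun p q => X (f p) (f q)).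
Proof.
move=> /(psd_sandwich (fun p a => (f p == a)%:R)); congr psd.
apply: op_ext => p q; rewrite -(sum_delta_l (f p) (fun a => X a (f q))).
apply: eq_bigr => a _; rewrite -(sum_delta_r (f q) (X a)) mulr_sumr.
by apply: eq_bigr => b _; rewrite conjC_nat mulrA.
Qed.

Lemma psdD (I : finType) (A B : op R I) : psd A -> psd B -> psd (opadd A B).
Proof.
move=> psdA psdB v; have := addr_ge0 (psdA v) (psdB v); congr (_ <= _).
rewrite -big_split; apply: eq_bigr => x _; rewrite -big_split.
by apply: eq_bigr => y _; rewrite /opadd /=; ring.
Qed.

Lemma psd0 (I : finType) : psd (op0 R : op R I).
Proof. by move=> v; rewrite big1 // => x _; rewrite big1 // => y _; rewrite /op0 mulr0 mul0r. Qed.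

Definition sesq (I : finType) (A : op R I) (u v : I -> C) :=
  \sum_a \sum_b (u a)^* * A a b * v b.

Lemma sesq_delta (I : finType) (A : op R I) x y :
  sesq A (fun z => (z == x)%:R) (fun z => (z == y)%:R) = A x y.
Proof.
rewrite -(sum_delta_l x (fun a => A a y)); apply: eq_bigr => a _.
rewrite -(sum_delta_r y (A a)) mulr_sumr; apply: eq_bigr => b _.
by rewrite conjC_nat (eq_sym a x) (eq_sym b y) mulrA.
Qed.

Lemma psd_diag (I : finType) (A : op R I) x : psd A -> 0 <= A x x.
Proof. by rewrite -sesq_delta; apply. Qed.

Lemma trace_ge0 (I : finType) (A : op R I) : psd A -> 0 <= trace A.
Proof. by move=> psdA; apply: sumr_ge0 => x _; exact: psd_diag. Qed.

Lemma diag_le_trace (I : finType) (A : op R I) x : psd A -> A x x <= trace A.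
Proof.
move=> psdA; rewrite /trace (bigD1 x) //= lerDl.
by apply: sumr_ge0 => y _; exact: psd_diag.
Qed.

Lemma cp_comp (I : finType) (M1 M2 : op R I -> op R I) :
  completely_positive M1 -> completely_positive M2 -> completely_positive (M1 \o M2).
Proof. by move=> cp1 cp2 k X psdX; exact: cp1 _ _ (cp2 _ _ psdX). Qed.

Lemma cpD (I : finType) (M1 M2 : op R I -> op R I) :
  completely_positive M1 -> completely_positive M2 ->
  completely_positive (fun rho => opadd (M1 rho) (M2 rho)).
Proof. by move=> cp1 cp2 k X psdX; exact: psdD (cp1 k X psdX) (cp2 k X psdX). Qed.

Lemma cp_id (I : finType) : completely_positive (@id (op R I)).
Proof. by move=> k X; congr psd; apply: op_ext => -[x i] [y j]. Qed.

Lemma cp0 (I : finType) : completely_positive (fun _ : op R I => op0 R : op R I).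
Proof. by move=> k X _; exact: psd0. Qed.

Lemma cp_psd (I : finType) (M : op R I -> op R I) rho :
  completely_positive M -> psd rho -> psd (M rho).
Proof.
move=> cpM psdr.
have := psd_reindex (fun x => (x, ord0)) (cpM 1%N _ (psd_reindex fst psdr)).
by congr psd; apply: op_ext.
Qed.

Lemma cp_conj (I : finType) (A : op R I) :
  completely_positive (fun rho => opmul A (opmul rho (adj A))).
Proof.
move=> k X psdX.
have := psd_sandwich (fun (p a : I * 'I_k) => A p.1 a.1 * (p.2 == a.2)%:R) psdX.
congr psd; apply: op_ext => p q; rewrite /ampl /opmul /adj /=.
transitivity (\sum_(a : I * 'I_k) (p.2 == a.2)%:R *
   (A p.1 a.1 * \sum_(b : I * 'I_k) (q.2 == b.2)%:R * (X a b * (A q.1 b.1)^*))).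
  apply: eq_bigr => a _; rewrite !mulr_sumr; apply: eq_bigr => b _.
  rewrite rmorphM /= conjC_nat; ring.
by rewrite sum_pair_delta; apply: eq_bigr => z _; rewrite sum_pair_delta.
Qed.

Lemma linear_conj (I : finType) (A A' : op R I) :
  linear_map (fun rho => opmul A (opmul rho A')).
Proof.
move=> a X Y; apply: op_ext => x y; rewrite /opmul /opadd /opscale /=.
rewrite mulr_sumr -big_split; apply: eq_bigr => z _ /=.
rewrite [a * _]mulrCA -mulrDr; congr (_ * _).
by rewrite mulr_sumr -big_split; apply: eq_bigr => w _ /=; ring.
Qed.

Lemma linearD (I : finType) (M1 M2 : op R I -> op R I) :
  linear_map M1 -> linear_map M2 -> linear_map (fun rho => opadd (M1 rho) (M2 rho)).
Proof.
by move=> lin1 lin2 a X Y; rewrite lin1 lin2; apply: op_ext => x y; rewrite /opadd /opscale; ring.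
Qed.

Lemma linear_comp (I : finType) (M1 M2 : op R I -> op R I) :
  linear_map M1 -> linear_map M2 -> linear_map (M1 \o M2).
Proof. by move=> lin1 lin2 a X Y /=; rewrite lin2 lin1. Qed.

Lemma linear_id (I : finType) : linear_map (@id (op R I)).
Proof. by []. Qed.

Lemma linear0 (I : finType) : linear_map (fun _ : op R I => op0 R : op R I).
Proof. by move=> a X Y; apply: op_ext => x y; rewrite /opadd /opscale /op0 mulr0 addr0. Qed.

Lemma linear_map_op0 (I : finType) (M : op R I -> op R I) : linear_map M -> M (op0 R) = op0 R.
Proof.
move=> linM; have := linM (-1) (op0 R) (op0 R).
have -> : opadd (opscale (-1) (op0 R)) (op0 R) = op0 R :> op R I.
  by apply: op_ext => x y; rewrite /opadd /opscale /op0 mulr0 addr0.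
move=> h; apply: op_ext => x y; rewrite {1}h /opadd /opscale /op0; ring.
Qed.

Lemma linear_map_sum (I : finType) (K : Type) (ks : seq K) (M : op R I -> op R I)
  (c : K -> C) (A : K -> op R I) : linear_map M ->
  M (fun x y => \sum_(k <- ks) c k * A k x y) = (fun x y => \sum_(k <- ks) c k * M (A k) x y).
Proof.
move=> linM; elim: ks => [|k ks IH].
  have -> : (fun x y => \sum_(k <- [::]) c k * A k x y) = op0 R.
    by apply: op_ext => x y; rewrite big_nil.
  by rewrite (linear_map_op0 linM); apply: op_ext => x y; rewrite big_nil.
have -> : (fun x y => \sum_(j <- k :: ks) c j * A j x y) =
   opadd (opscale (c k) (A k)) (fun x y => \sum_(j <- ks) c j * A j x y).
  by apply: op_ext => x y; rewrite big_cons.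
by rewrite linM IH; apply: op_ext => x y; rewrite big_cons.
Qed.

Lemma trace0 (I : finType) : trace (op0 R : op R I) = 0.
Proof. by rewrite /trace big1. Qed.

Lemma traceD (I : finType) (A1 A2 : op R I) : trace (opadd A1 A2) = trace A1 + trace A2.
Proof. by rewrite /trace -big_split. Qed.

Lemma trace_conj (I : finType) (A rho A' : op R I) :
  trace (opmul A (opmul rho A')) = trace (opmul (opmul A' A) rho).
Proof.
rewrite /trace /opmul; transitivity (\sum_x \sum_z \sum_w A x z * rho z w * A' w x).
  by apply: eq_bigr => x _; apply: eq_bigr => z _; rewrite mulr_sumr; apply: eq_bigr => w _; ring.
symmetry; transitivity (\sum_w \sum_x \sum_z A x z * rho z w * A' w x).
  apply: eq_bigr => w _; under eq_bigr => z _ do rewrite mulr_suml.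
  by rewrite exchange_big; apply: eq_bigr => x _; apply: eq_bigr => z _ /=; ring.
by rewrite exchange_big; apply: eq_bigr => x _; rewrite exchange_big.
Qed.

Lemma trace_op1 (I : finType) (rho : op R I) : trace (opmul (op1 R) rho) = trace rho.
Proof. by apply: eq_bigr => x _; rewrite /opmul /op1 sum_delta_l. Qed.

Lemma trace_kraus2 (I : finType) (A1 A1' A2 A2' : op R I) rho :
  opadd (opmul A1' A1) (opmul A2' A2) = op1 R ->
  trace (opadd (opmul A1 (opmul rho A1')) (opmul A2 (opmul rho A2'))) = trace rho.
Proof.
move=> kraus; rewrite -[RHS]trace_op1 -kraus traceD !trace_conj /trace -big_split.
apply: eq_bigr => x _; rewrite /opmul /opadd -big_split.
by apply: eq_bigr => z _; rewrite mulrDl.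
Qed.

End Operators.

Section Qubits.
Variables (R : realType) (N : nat).
Local Notation C := R[i].
Local Notation B := (basis N).
Local Notation restrict := Defs.restrict.
Local Notation merge := Defs.merge.

Definition agree_off k (qs : k.-tuple 'I_N) (x y : B) :=
  [forall j, (j \notin qs) ==> (x j == y j)].

Lemma agree_off_refl k (qs : k.-tuple 'I_N) x : agree_off qs x x.
Proof. by apply/forallP => j; rewrite eqxx implybT. Qed.

Lemma agree_off_sym k (qs : k.-tuple 'I_N) x y : agree_off qs x y = agree_off qs y x.
Proof. by apply: eq_forallb => j; rewrite eq_sym. Qed.

Lemma agree_off_trans k (qs : k.-tuple 'I_N) x y z :
  agree_off qs x y -> agree_off qs y z -> agree_off qs x z.
Proof.
move=> /forallP xy /forallP yz; apply/forallP => j; apply/implyP => jq.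
by rewrite (eqP (implyP (xy j) jq)) (implyP (yz j) jq).
Qed.

Lemma restrict_merge k (qs : k.-tuple 'I_N) a x :
  uniq qs -> restrict qs (merge qs a x) = a.
Proof.
move=> /tuple_uniqP inj; apply/ffunP => i; rewrite !ffunE.
case: pickP => [i' /eqP /inj -> // | /(_ i)]; by rewrite eqxx.
Qed.

Lemma agree_off_merge k (qs : k.-tuple 'I_N) a x : agree_off qs x (merge qs a x).
Proof.
apply/forallP => j; apply/implyP => jq; rewrite ffunE.
by case: pickP => [i /eqP ji | //]; rewrite -ji mem_tnth in jq.
Qed.

Lemma merge_restrict k (qs : k.-tuple 'I_N) x z :
  agree_off qs x z -> merge qs (restrict qs z) x = z.
Proof.
move=> /forallP xz; apply/ffunP => j; rewrite ffunE.
case: pickP => [i /eqP <- | nq]; first by rewrite ffunE.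
have jq : j \notin qs by apply/negP => /tnthP [i ji]; have := nq i; rewrite -ji eqxx.
exact/eqP/(implyP (xz j) jq).
Qed.

Lemma merge_merge k (qs : k.-tuple 'I_N) a b x : merge qs b (merge qs a x) = merge qs b x.
Proof. by apply/ffunP => j; rewrite !ffunE; case: pickP. Qed.

Lemma sum_agree_off k (qs : k.-tuple 'I_N) x (h : B -> C) :
  uniq qs -> \sum_z (agree_off qs x z)%:R * h z = \sum_a h (merge qs a x).
Proof.
move=> uq; transitivity (\sum_z \sum_a (merge qs a x == z)%:R * h z).
  apply: eq_bigr => z _; rewrite -mulr_suml; congr (_ * _).
  case: (boolP (agree_off qs x z)) => xz.
    rewrite (bigD1 (restrict qs z)) //= merge_restrict // eqxx big1 ?addr0 // => a az.
    by case: eqP => // za; rewrite -za restrict_merge ?eqxx in az.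
  by rewrite big1 // => a _; case: eqP => // za; rewrite -za agree_off_merge in xz.
by rewrite exchange_big; apply: eq_bigr => a _; rewrite sum_delta_l.
Qed.

Lemma liftopE k (qs : k.-tuple 'I_N) (A : op R (basis k)) x y :
  liftop qs A x y = A (restrict qs x) (restrict qs y) * (agree_off qs x y)%:R.
Proof. by []. Qed.

Lemma liftopM k (qs : k.-tuple 'I_N) (A1 A2 : op R (basis k)) :
  uniq qs -> opmul (liftop qs A1) (liftop qs A2) = liftop qs (opmul A1 A2).
Proof.
move=> uq; apply: op_ext => x y; rewrite /opmul liftopE.
transitivity (\sum_z (agree_off qs x z)%:R *
   (A1 (restrict qs x) (restrict qs z) * A2 (restrict qs z) (restrict qs y) *
    (agree_off qs x y)%:R)).
  apply: eq_bigr => z _; rewrite !liftopE.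
  case: (boolP (agree_off qs x z)) => xz; last by rewrite !(mulr0, mul0r).
  have -> : agree_off qs z y = agree_off qs x y.
    apply/idP/idP => [|xy]; first exact: agree_off_trans.
    by apply: agree_off_trans xy; rewrite agree_off_sym.
  by rewrite /=; ring.
rewrite sum_agree_off // mulr_suml; apply: eq_bigr => a _.
by rewrite !restrict_merge.
Qed.

Lemma liftop1 k (qs : k.-tuple 'I_N) : liftop qs (op1 R : op R (basis k)) = op1 R.
Proof.
apply: op_ext => x y; rewrite liftopE /op1.
have [<-|xy] := eqVneq x y; first by rewrite !eqxx agree_off_refl mulr1.
case: eqP => [rxy | _]; last by rewrite mul0r.
case: (boolP (agree_off qs x y)) => [hxy | _]; last by rewrite mulr0.
have := merge_restrict hxy; rewrite -rxy merge_restrict ?agree_off_refl // => yx.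
by rewrite yx eqxx in xy.
Qed.

Lemma adj_liftop k (qs : k.-tuple 'I_N) (A : op R (basis k)) :
  adj (liftop qs A) = liftop qs (adj A).
Proof. by apply: op_ext => x y; rewrite /adj !liftopE rmorphM /= conjC_nat agree_off_sym. Qed.

Lemma liftopD k (qs : k.-tuple 'I_N) (A1 A2 : op R (basis k)) :
  liftop qs (opadd A1 A2) = opadd (liftop qs A1) (liftop qs A2).
Proof. by apply: op_ext => x y; rewrite /liftop /opadd mulrDl. Qed.

Lemma sum_basis1 (j : bool) : \sum_(z : basis 1) ((z ord0 == j)%:R : C) = 1.
Proof.
rewrite -[RHS](sum_delta_r ([ffun=> j] : basis 1) (fun _ => 1 : C)).
apply: eq_bigr => z _; rewrite mul1r; have -> // : (z ord0 == j) = ([ffun=> j] == z).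
apply/eqP/eqP => [zj | <-]; last by rewrite ffunE.
by apply/ffunP => o; rewrite ffunE (ord1 o).
Qed.

Lemma ketbraM i j l : opmul (ketbra R i j) (ketbra R j l) = ketbra R i l.
Proof.
apply: op_ext => a b; rewrite /opmul /ketbra.
rewrite (eq_bigr (fun z : basis 1 =>
            ((a ord0 == i) && (b ord0 == l))%:R * ((z ord0 == j)%:R : C))).
  by rewrite -mulr_sumr sum_basis1 mulr1.
move=> z _.
by case: (a ord0 == i); case: (b ord0 == l); case: (z ord0 == j); rewrite ?mulr0 ?mul0r ?mulr1.
Qed.

Lemma ketbra_sum : opadd (ketbra R false false) (ketbra R true true) = op1 R.
Proof.
apply: op_ext => a b; rewrite /opadd /ketbra /op1.
have -> : (a == b) = (a ord0 == b ord0).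
  by apply/eqP/eqP => [-> // | ab]; apply/ffunP => o; rewrite (ord1 o).
by case: (a ord0); case: (b ord0); rewrite /= ?addr0 ?add0r.
Qed.

Lemma adj_kb (q : 'I_N) i j : adj (kb R q i j) = kb R q j i.
Proof.
rewrite adj_liftop; congr liftop.
by apply: op_ext => a b; rewrite /adj /ketbra conjC_nat andbC.
Qed.

Lemma kb_kraus (q : 'I_N) :
  opadd (opmul (kb R q false false) (kb R q false false))
        (opmul (kb R q true true) (kb R q true true)) = op1 R.
Proof. by rewrite !liftopM // !ketbraM -liftopD ketbra_sum liftop1. Qed.

Lemma trace_init (q : 'I_N) : trace_preserving (@init_map R N q).
Proof.
move=> rho; apply: trace_kraus2.
by rewrite !liftopM // !ketbraM -liftopD ketbra_sum liftop1.
Qed.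

Lemma trace_meas (q : 'I_N) (rho : op R B) :
  trace (opadd (meas_map q false rho) (meas_map q true rho)) = trace rho.
Proof. exact: trace_kraus2 (kb_kraus q). Qed.

Lemma trace_unit k (qs : k.-tuple 'I_N) (U : op R (basis k)) :
  uniq qs -> unitary U -> trace_preserving (@unit_map R N k qs U).
Proof.
by move=> uq [_ UU] rho; rewrite /unit_map trace_conj adj_liftop liftopM // UU liftop1 trace_op1.
Qed.

(* Exactly #|basis k| states x agree with a given z off qs, so
   c * trace A = \sum_x \sum_a A (merge qs a x) (merge qs a x): both traces
   become sums of traces of the diagonal blocks of rho. *)
Lemma trace_liftmap k (qs : k.-tuple 'I_N) (E : op R (basis k) -> op R (basis k)) :
  uniq qs -> trace_preserving E -> trace_preserving (liftmap qs E).
Proof.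
move=> uq trE rho.
pose block (x : B) : op R (basis k) := fun a b => rho (merge qs a x) (merge qs b x).
pose c : C := #|{: basis k}|%:R.
have sum_off (F : B -> C) : \sum_x \sum_z (agree_off qs x z)%:R * F z = c * \sum_z F z.
  rewrite exchange_big mulr_sumr; apply: eq_bigr => z _; rewrite -mulr_suml.
  under eq_bigr => x _ do rewrite agree_off_sym -[_%:R]mulr1.
  by rewrite sum_agree_off // sumr_const.
have traceE (A : op R B) (D : B -> op R (basis k)) :
    (forall x a, A (merge qs a x) (merge qs a x) = D x a a) ->
    c * trace A = \sum_x trace (D x).
  move=> AD; rewrite /trace -sum_off; apply: eq_bigr => x _.
  by rewrite sum_agree_off //; apply: eq_bigr => a _; exact: AD.
have E1 : c * trace (liftmap qs E rho) = \sum_x trace (E (block x)).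
  apply: traceE => x a; rewrite /liftmap restrict_merge //; congr (E _ _ _).
  by apply: op_ext => a' b'; rewrite !merge_merge.
have : c * trace (liftmap qs E rho) = c * trace rho.
  by rewrite E1 (traceE _ block) //; apply: eq_bigr => x _; exact: trE.
by apply: mulfI; rewrite pnatr_eq0 -lt0n; apply/card_gt0P; exists [ffun=> false].
Qed.

Lemma linear_liftmap k (qs : k.-tuple 'I_N) (E : op R (basis k) -> op R (basis k)) :
  linear_map E -> linear_map (liftmap qs E).
Proof.
move=> linE a X Y; apply: op_ext => x y.
by rewrite /liftmap (linE a (fun a' b' => X (merge qs a' x) (merge qs b' y))
                         (fun a' b' => Y (merge qs a' x) (merge qs b' y))).
Qed.

(* An amplification of [liftmap qs E] is, after reindexing, an amplification
   of [E] by the finite type [B * 'I_m]. *)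
Lemma cp_liftmap k (qs : k.-tuple 'I_N) (E : op R (basis k) -> op R (basis k)) :
  completely_positive E -> completely_positive (liftmap qs E).
Proof.
move=> cpE m X psdX; pose T := (B * 'I_m)%type.
pose g (u : (basis k * 'I_#|{: T}|)%type) : T :=
  (merge qs u.1 (enum_val u.2).1, (enum_val u.2).2).
have := psd_reindex (fun p : T => (restrict qs p.1, enum_rank p)) (cpE _ _ (psd_reindex g psdX)).
by congr psd; apply: op_ext => -[x i] [y j]; rewrite /ampl /liftmap /g /= !enum_rankK.
Qed.

End Qubits.

Section Polarization.
Variables (R : realType) (I : finType).
Local Notation C := R[i].

Definition polar_vec (x y : I) (c : C) : I -> C := fun z => (z == x)%:R + c * (z == y)%:R.

Definition phase (i : 'I_4) : C := nth 0 [:: 1; -1; 'i; -'i] i.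

Definition rank1 (u : I -> C) : op R I := fun x y => u x * (u y)^*.

Lemma sesq_polar_vec (A : op R I) x y c :
  sesq A (polar_vec x y c) (polar_vec x y c) =
  A x x + c * A x y + c^* * A y x + c^* * c * A y y.
Proof.
rewrite -!sesq_delta /sesq !mulr_sumr -!big_split; apply: eq_bigr => a _ /=.
rewrite !mulr_sumr -!big_split; apply: eq_bigr => b _ /=.
rewrite /polar_vec rmorphD rmorphM /=; ring.
Qed.

Lemma phase_norm i : (phase i)^* * phase i = 1.
Proof.
have i2 : ('i : C) ^+ 2 = -1 by rewrite sqrCi.
case: i => [[|[|[|[|m]]]] hm] //; rewrite /phase /=.
- by rewrite conjC1 mulr1.
- by rewrite rmorphN1 mulrNN mulr1.
- by rewrite conjCi; ring: i2.
- by rewrite raddfN /= conjCi; ring: i2.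
Qed.

Lemma polarization (A : op R I) x y :
  A x y = \sum_(i < 4)
            ((phase i)^* / 4) * sesq A (polar_vec x y (phase i)) (polar_vec x y (phase i)).
Proof.
have i2 : ('i : C) ^+ 2 = -1 by rewrite sqrCi.
rewrite !big_ord_recr big_ord0 /= !sesq_polar_vec /phase /=.
by rewrite conjC1 rmorphN1 raddfN /= conjCi opprK; field: i2.
Qed.

Lemma psd_rank1 u : psd (rank1 u).
Proof.
move=> v; have := mul_conjC_ge0 (\sum_x (v x)^* * u x); congr (_ <= _).
rewrite mulr_suml; apply: eq_bigr => x _; rewrite rmorph_sum mulr_sumr; apply: eq_bigr => y _.
by rewrite rmorphM /= conjCK /rank1; ring.
Qed.

Lemma rank1_polarization (a b x y : I) :
  (x == a)%:R * (y == b)%:R = \sum_(i < 4) (phase i / 4) * rank1 (polar_vec a b (phase i)) x y.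
Proof.
have i2 : ('i : C) ^+ 2 = -1 by rewrite sqrCi.
rewrite !big_ord_recr big_ord0 /= /rank1 /polar_vec /phase /=.
rewrite !rmorphD !rmorphM /= !conjC_nat conjC1 rmorphN1 raddfN /= conjCi.
by field: i2.
Qed.

Lemma rank1_decomposition (rho : op R I) :
  rho = fun x y => \sum_(k : I * I * 'I_4)
     (rho k.1.1 k.1.2 * phase k.2 / 4) * rank1 (polar_vec k.1.1 k.1.2 (phase k.2)) x y.
Proof.
apply: op_ext => x y; rewrite !sum_pair /=.
rewrite -(sum_delta_l x (fun a => rho a y)); apply: eq_bigr => a _.
rewrite -(sum_delta_l y (rho a)) mulr_sumr; apply: eq_bigr => b _.
rewrite mulrA mulrC rank1_polarization mulr_sumr.
by apply: eq_bigr => i _; ring.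
Qed.

Lemma sesq_polar_le (A : op R I) x y c : psd A -> c^* * c = 1 ->
  sesq A (polar_vec x y c) (polar_vec x y c) <= 4 * trace A.
Proof.
move=> psdA cc.
have sum2 : sesq A (polar_vec x y c) (polar_vec x y c) +
            sesq A (polar_vec x y (- c)) (polar_vec x y (- c)) = 2 * A x x + 2 * A y y.
  by rewrite !sesq_polar_vec raddfN /=; ring: cc.
apply: le_trans (_ : _ <= 2 * A x x + 2 * A y y) _.
  by rewrite -sum2 lerDl; apply: psdA.
have -> : 4 * trace A = 2 * trace A + 2 * trace A by ring.
by apply: lerD; rewrite ler_wpM2l // diag_le_trace.
Qed.

End Polarization.
Arguments phase {R} i.

Section ChannelLimit.
Variables (R : realType) (I : finType) (T : eqType).
Variable F : T -> op R I -> op R I.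
Hypothesis F_linear : forall p, linear_map (F p).
Hypothesis F_cp : forall p, completely_positive (F p).
Hypothesis F_trace_le : forall rho, psd rho -> forall s, uniq s ->
  \sum_(p <- s) trace (F p rho) <= trace rho.

Lemma has_sumr_psd rho : psd rho ->
  exists L : op R I, forall x y, has_sumr (fun p => F p rho x y) (L x y).
Proof.
move=> psdr.
have /functional_choice [l hl] : forall j : I * I * 'I_4, exists l, has_sumr (fun p =>
    sesq (F p rho) (polar_vec j.1.1 j.1.2 (phase j.2)) (polar_vec j.1.1 j.1.2 (phase j.2))) l.
  move=> [[x y] i]; apply: (@ge0_bounded_has_sumr _ _ _ (4 * trace rho)).
    by move=> p; apply: (cp_psd (F_cp p) psdr).
  move=> s us; apply: le_trans (_ : _ <= \sum_(p <- s) 4 * trace (F p rho)) _.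
    by apply: ler_sum => p _; apply: sesq_polar_le; [exact: cp_psd | exact: phase_norm].
  by rewrite -mulr_sumr ler_wpM2l // F_trace_le.
exists (fun x y => \sum_(i < 4) ((phase i)^* / 4) * l (x, y, i)) => x y.
apply: eq_has_sumr (has_sumr_sum _ (fun i => has_sumrZ _ (hl (x, y, i)))) => p.
by rewrite [RHS]polarization.
Qed.

Lemma has_sumr_op rho : exists L : op R I, forall x y, has_sumr (fun p => F p rho x y) (L x y).
Proof.
pose P (k : I * I * 'I_4) : op R I := rank1 (polar_vec k.1.1 k.1.2 (phase k.2)).
have /functional_choice [L hL] : forall k, exists L : op R I,
    forall x y, has_sumr (fun p => F p (P k) x y) (L x y).
  by move=> k; apply/has_sumr_psd/psd_rank1.
exists (fun x y => \sum_k (rho k.1.1 k.1.2 * phase k.2 / 4) * L k x y) => x y.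
apply: eq_has_sumr (has_sumr_sum _ (fun k => has_sumrZ _ (hL k x y))) => p.
by rewrite [in RHS](rank1_decomposition rho) linear_map_sum.
Qed.

Variable E : op R I -> op R I.
Hypothesis E_sum : forall rho x y, has_sumr (fun p => F p rho x y) (E rho x y).

Lemma limit_linear : linear_map E.
Proof.
move=> a X Y; apply: op_ext => x y; apply: (has_sumr_unique (E_sum _ x y)).
apply: eq_has_sumr (has_sumrD (has_sumrZ a (E_sum X x y)) (E_sum Y x y)) => p.
by rewrite F_linear.
Qed.

Lemma limit_cp : completely_positive E.
Proof.
move=> k X psdX v.
apply: (@has_sumr_ge _ _ (fun p => sesq (ampl (F p) X) v v)).
  by move=> s us; apply: sumr_ge0 => p _; exact: F_cp.
apply: has_sumr_sum => a; apply: has_sumr_sum => b.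
have -> : (v a)^* * ampl E X a b * v b =
          (v a)^* * v b * E (fun x y => X (x, a.2) (y, b.2)) a.1 b.1 by rewrite /ampl; ring.
apply: eq_has_sumr (has_sumrZ _ (E_sum _ a.1 b.1)) => p.
by rewrite /ampl; ring.
Qed.

Lemma limit_trace_le rho : psd rho -> trace (E rho) <= trace rho.
Proof.
move=> psdr; apply: (@has_sumr_le _ _ (fun p => trace (F p rho))); first exact: F_trace_le.
by apply: has_sumr_sum => x; exact: E_sum.
Qed.

End ChannelLimit.

Lemma has_sum_entrywise (R : realType) (N : nat)
  (f : seq bool -> op R (basis N)) (L : op R (basis N)) :
  (forall x y, has_sumr (fun p => f p x y) (L x y)) -> has_sum f L.
Proof.
move=> fL eps e0.
have [s0 Hs] := has_sumr_uniform (fun j : basis N * basis N => fL j.1 j.2) e0.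
by exists s0 => s us sub x y; exact: (Hs s us sub (x, y)).
Qed.

Fixpoint bitstrings (k : nat) : seq (seq bool) :=
  if k is k'.+1 then [seq rcons p b | p <- bitstrings k', b <- [:: false; true]]
  else [:: [::]].

Lemma mem_bitstrings k p : (p \in bitstrings k) = (size p == k).
Proof.
elim: k p => [|k IH] p; first by rewrite inE size_eq0.
apply/allpairsPdep/idP => [[q [b [qk _ ->]]] | ].
  by rewrite size_rcons eqSS -IH.
case/lastP: p => [//|q b]; rewrite size_rcons eqSS -IH => qk.
by exists q, b; split => //; case: b.
Qed.

Lemma uniq_bitstrings k : uniq (bitstrings k).
Proof.
elim: k => [//|k IH]; apply: (@allpairs_uniq _ _ _ (fun p b => rcons p b)) => //.
by move=> [p1 b1] [p2 b2] _ _ /= /rcons_inj [-> ->].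
Qed.

Section Programs.
Variables (R : realType) (N : nat).
Local Notation B := (basis N).

(* [wf_prog] without the exclusion of the terminated program, so that it is
   preserved by transitions. *)
Fixpoint gates_wf (P : prog R N) : Prop :=
  match P with
  | PSeq S1 S2 | PIf _ S1 S2 => gates_wf S1 /\ gates_wf S2
  | PUnit k qs U => uniq qs /\ unitary U
  | PRepeat P _ => gates_wf P
  | _ => True
  end.

Lemma wf_prog_gates P : wf_prog P -> gates_wf P.
Proof. by elim: P => /=; intros; tauto. Qed.

Lemma gates_wf_pseq S1 S2 : gates_wf S1 -> gates_wf S2 -> gates_wf (pseq S1 S2).
Proof. by case: S1. Qed.

Lemma gates_wf_meas_cont P : gates_wf P -> gates_wf (meas_cont P).
Proof. by elim: P => //= S1 IH1 S2 _ [/IH1 wf1 wf2]; exact: gates_wf_pseq. Qed.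

Definition cptp (M : op R B -> op R B) :=
  [/\ linear_map M, completely_positive M & trace_preserving M].

Lemma linear_meas (q : 'I_N) c : linear_map (@meas_map R N q c).
Proof. exact: linear_conj. Qed.

Lemma cp_meas (q : 'I_N) c : completely_positive (@meas_map R N q c).
Proof. by have := cp_conj (kb R q c c); rewrite adj_kb. Qed.

Lemma cptp_id : cptp id.
Proof. by split; [exact: linear_id | exact: cp_id | move=> rho]. Qed.

Lemma cptp_init (q : 'I_N) : cptp (init_map q).
Proof.
split; last exact: trace_init.
- exact: linearD (linear_conj _ _) (linear_conj _ _).
- by have := cpD (cp_conj (kb R q false false)) (cp_conj (kb R q false true)); rewrite !adj_kb.
Qed.

Lemma cptp_unit k (qs : k.-tuple 'I_N) U : uniq qs -> unitary U -> cptp (unit_map qs U).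
Proof. by move=> uq uU; split; [exact: linear_conj | exact: cp_conj | exact: trace_unit]. Qed.

Lemma cptp_local k (qs : k.-tuple 'I_N) M : uniq qs -> local_cptp qs M -> cptp M.
Proof.
move=> uq [E [linE cpE trE ->]].
by split; [exact: linear_liftmap | exact: cp_liftmap | exact: trace_liftmap].
Qed.

Lemma step1_cptp S s S' s' M f : step1 S s S' s' M f -> gates_wf S -> gates_wf S' /\ cptp M.
Proof.
elim=> {S s S' s' M f} /=.
- by move=> q s _; split => //; exact: cptp_init.
- by move=> q s M locM _; split => //; exact: cptp_local locM.
- by move=> k qs U s [uq uU]; split => //; exact: cptp_unit.
- by move=> k qs U s M locM [uq _]; split => //; exact: cptp_local locM.
- by move=> *; split => //; exact: cptp_id.
- by move=> *; split => //; exact: cptp_id.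
- by move=> b S1 S2 s _ [wf1 _]; split => //; exact: cptp_id.
- by move=> b S1 S2 s _ [_ wf2]; split => //; exact: cptp_id.
- by move=> P b s wfP; split => //; exact: cptp_id.
- move=> S1 S2 s S1' s' M f _ IH [wf1 wf2].
  by have [wf1' cptpM] := IH wf1; split => //; exact: gates_wf_pseq.
Qed.

Section Tree.
Variables (r : nat) (S0 : prog R N) (s0 : cstate) (t : tree R N).
Hypotheses (wfS0 : wf_prog S0) (tree_t : is_fault_tree r S0 s0 t).

Lemma node_cp p n : t p = Some n ->
  [/\ gates_wf (nprog n), linear_map (nq n) & completely_positive (nq n)].
Proof.
case: tree_t => troot tnone tnode _.
elim/last_ind: p n => [|p b IH] n.
  by rewrite troot => -[<-] /=; split; [exact: wf_prog_gates | exact: linear_id | exact: cp_id].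
case tp: (t p) => [m|]; last by rewrite tnone.
have [wfm linm cpm] := IH _ tp.
move: (tnode p m tp); case: ifP => [_ /(_ b) -> // | _].
case: (head_meas (nprog m)) => [[x q]|].
  case=> [ideal | [M0 [M1 [loc0 loc1 _ faulty]]]].
    rewrite ideal => -[<-] /=; split; first exact: gates_wf_meas_cont.
    - exact: linear_comp (linear_meas _ _) linm.
    - exact: cp_comp (cp_meas _ _) cpm.
  rewrite faulty => -[<-] /=; split; first exact: gates_wf_meas_cont.
  - case: b; [case: loc1 | case: loc0] => E [linE _ ->];
      exact: linear_comp (linear_liftmap _ linE) linm.
  - case: b; [case: loc1 | case: loc0] => E [_ cpE ->];
      exact: cp_comp (cp_liftmap _ cpE) cpm.
case=> tnone' [n' [tn' [M [stepM qn']]]].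
case: b; first by rewrite tnone'.
rewrite tn' => -[<-]; have [wf' [linM cpM _]] := step1_cptp stepM wfm.
by rewrite qn'; split => //; [exact: linear_comp | exact: cp_comp].
Qed.

Lemma leafval_cp p :
  linear_map (fun rho => leafval t rho p) /\ completely_positive (fun rho => leafval t rho p).
Proof.
rewrite /leafval; case tp: (t p) => [n|]; last by split; [exact: linear0 | exact: cp0].
have [_ linn cpn] := node_cp tp.
by case: (is_leaf n); split => //; [exact: linear0 | exact: cp0].
Qed.

Variable rho : op R B.

Definition node_trace p := if t p is Some n then trace (nq n rho) else 0.

Local Notation leaf_trace p := (trace (leafval t rho p)).

Lemma node_trace_children p :
  node_trace (rcons p false) + node_trace (rcons p true) = node_trace p - leaf_trace p.
Proof.
case: tree_t => _ tnone tnode _.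
rewrite /node_trace /leafval; case tp: (t p) => [n|]; last by rewrite !tnone ?trace0 ?subr0 ?addr0.
have [wfn _ _] := node_cp tp.
move: (tnode p n tp); case: ifP => [_ leaf | _]; first by rewrite !leaf subrr addr0.
rewrite trace0 subr0.
case: (head_meas (nprog n)) => [[x q]|].
  case=> [ideal | [M0 [M1 [_ _ trM faulty]]]]; first by rewrite !ideal /= -traceD trace_meas.
  by rewrite !faulty /= -traceD trM.
case=> tnone' [n' [tn' [M [stepM qn']]]].
have [_ [_ _ trM]] := step1_cptp stepM wfn.
by rewrite tnone' tn' /= qn' trM addr0.
Qed.

Lemma depth_trace d :
  \sum_(k < d) \sum_(p <- bitstrings k) leaf_trace p + \sum_(p <- bitstrings d) node_trace p
  = trace rho.
Proof.
elim: d => [|d IH].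
  by case: tree_t => troot _ _ _; rewrite big_ord0 add0r big_seq1 /node_trace troot.
rewrite big_ord_recr /= -addrA -IH; congr (_ + _).
rewrite big_flatten big_map /=.
under [X in _ + X]eq_bigr => p _ do rewrite big_cons big_seq1 node_trace_children.
by rewrite sumrB addrC subrK.
Qed.

Hypothesis psd_rho : psd rho.

Lemma node_trace_ge0 p : 0 <= node_trace p.
Proof.
rewrite /node_trace; case tp: (t p) => [n|//].
by have [_ _ cpn] := node_cp tp; exact/trace_ge0/(cp_psd cpn).
Qed.

Lemma leaf_trace_le s : uniq s -> \sum_(p <- s) leaf_trace p <= trace rho.
Proof.
move=> us; pose d := (\max_(p <- s) size p).+1.
have leaf_ge0 p : 0 <= leaf_trace p.
  by have [_ cpp] := leafval_cp p; exact/trace_ge0/(cp_psd cpp).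
apply: le_trans (_ : _ <= \sum_(k < d) \sum_(p <- bitstrings k) leaf_trace p) _; last first.
  by rewrite -(depth_trace d) lerDl sumr_ge0 // => k _; exact: node_trace_ge0.
rewrite (eq_big_seq (fun p => \sum_(k < d) (size p == k)%:R * leaf_trace p)) => [|p ps]; last first.
  have pd : (size p < d)%N by rewrite ltnS leq_bigmax_seq.
  by rewrite (eq_bigr (fun k : 'I_d => (Ordinal pd == k)%:R * leaf_trace p)) ?sum_delta_l.
rewrite exchange_big /=; apply: ler_sum => k _.
have -> : \sum_(p <- s) (size p == k)%:R * leaf_trace p =
          \sum_(p <- [seq p <- s | size p == k]) leaf_trace p.
  rewrite big_filter [RHS]big_mkcond; apply: eq_bigr => p _.
  by case: (size p == k); rewrite ?mul1r ?mul0r.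
apply: ler_sum_subset; rewrite ?filter_uniq ?uniq_bitstrings // => p.
by rewrite mem_filter mem_bitstrings => /andP [].
Qed.

End Tree.
End Programs.

Unset Implicit Arguments.

Theorem proposition1 (R : realType) (N : nat) (S0 : prog R N) (s0 : cstate)
  (r : nat) (t : tree R N) :
  wf_prog S0 -> is_fault_tree r S0 s0 t ->
  exists E : op R (basis N) -> op R (basis N),
    [/\ (forall rho, has_sum (leafval t rho) (E rho)),
        linear_map E,
        completely_positive E &
        (forall rho, psd rho -> trace (E rho) <= trace rho)].
Proof.
move=> wfS0 tree_t; pose F p rho := leafval t rho p.
have F_linear p : linear_map (F p) by case: (leafval_cp wfS0 tree_t p).
have F_cp p : completely_positive (F p) by case: (leafval_cp wfS0 tree_t p).
have F_trace_le := leaf_trace_le wfS0 tree_t.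
have /functional_choice [E E_sum] := has_sumr_op F_linear F_cp F_trace_le.
exists E; split.
- by move=> rho; apply: has_sum_entrywise; exact: E_sum.
- exact: (limit_linear F_linear E_sum).
- exact: (limit_cp F_cp E_sum).
- exact: (limit_trace_le F_trace_le E_sum).
Qed.
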